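(* For every countable linear order $Y$, $\mathsf{rk}(Y)=\mathsf{rk}(Y^* )$, where $Y^*$ denotes $Y$ with the reversed ordering.
   Context: Let $\mathcal F$ be the class of finite linear orders (language $\{<\}$); countable linear orders are the structures considered; substructures are suborders and $\mathsf{age}(X)$ is the set of finite suborders of $X$. For $A\le B$, $B$ is a prime extension of $A$ if $|B\setminus A|=1$; a realization of $B$ in $X$ (where $A\le X$) is $C\le X$ with $A\le C$ and an order-isomorphism $B\to C$ fixing $A$ pointwise. For $F\in\mathsf{age}(X)$ define by recursion: $\mathsf{rk}_X(F)\ge0$ always; $\mathsf{rk}_X(F)\ge\alpha+1$ iff every prime extension $B\in\mathcal F$ of $F$ has a realization $C$ in $X$ with $\mathsf{rk}_X(C)\ge\alpha$; for limit $\alpha$, $\mathsf{rk}_X(F)\ge\alpha$ iff $\mathsf{rk}_X(F)\ge\beta$ for all $\beta<\alpha$. $\mathsf{rk}_X(F)=\sup\{\alpha:\mathsf{rk}_X(F)\ge\alpha\}$ (or $\infty$), and $\mathsf{rk}(X)=\mathsf{rk}_X(\emptyset)$. *)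

From HB Require Import structures.
From mathcomp Require Import all_boot all_order.
From mathcomp Require Import finmap.
Unset Printing Implicit Defensive.
Local Open Scope fset_scope.

Definition strict_linear_order (T : Type) (lt : T -> T -> bool) : Prop :=
  [/\ (forall x, ~~ lt x x),
      (forall x y z, lt x y -> lt y z -> lt x z) &
      (forall x y, x <> y -> lt x y \/ lt y x)].

Definition rev_order (X : Type) (lt : rel X) : rel X := fun x y => lt y x.

(* A prime extension B of F (a finite linear order having F
   as a suborder with exactly one extra point) is, up to isomorphism over F,
   a strict linear order [ltB] on the carrier [option F] (the new point is
   [None]) whose restriction to the points [Some a] is the order of X. *)
Definition prime_ext (X : choiceType) (lt : rel X) (F : {fset X})
    (ltB : rel (option F)) : Prop :=
  strict_linear_order (option F) ltB /\
  (forall a b : F, ltB (Some a) (Some b) = lt (val a) (val b)).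

(* A realization of B in X: a suborder C = F ∪ {x}, x ∉ F, with an
   isomorphism B -> C fixing F pointwise (necessarily None |-> x). *)
Definition realizes (X : choiceType) (lt : rel X) (F : {fset X})
    (ltB : rel (option F)) (x : X) : Prop :=
  x \notin F /\
  (forall a : F, ltB None (Some a) = lt x (val a) /\
                 ltB (Some a) None = lt (val a) x).

(* rk_ge lt R a F  means  rk_X(F) >= alpha, where the ordinal alpha is the
   one represented by the node a of the well-founded relation R (i.e. the
   well-founded rank of a).  The clause "for every beta < alpha, every prime
   extension of F has a realization C with rk_X(C) >= beta" is equivalent
   to the successor/limit recursion of the paper (0: vacuous; alpha+1: by
   monotonicity; limit: by unfolding). *)
Inductive rk_ge (X : choiceType) (lt : rel X) (I : Type) (R : I -> I -> Prop)
  : I -> {fset X} -> Prop :=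
| RkGe (a : I) (F : {fset X}) :
    (forall b, R b a ->
       forall ltB : rel (option F), prime_ext X lt F ltB ->
         exists x, realizes X lt F ltB x /\ rk_ge X lt I R b (x |` F)) ->
    rk_ge X lt I R a F.

From HB Require Import structures.
From mathcomp Require Import all_boot all_order.
From mathcomp Require Import finmap.
Local Open Scope fset_scope.

(* Reversal is an involution that commutes with the notions entering the rank:
   B is a prime extension of F in Y^* iff B^* is one in Y, and a point x
   realizes B^* in Y iff it realizes B in Y^*.  Hence every witness tree for
   rk_Y(F) >= alpha is, point for point, one for rk_{Y^*}(F) >= alpha. *)

Lemma strict_linear_order_rev (T : Type) (lt : rel T) :
  strict_linear_order T lt -> strict_linear_order T (rev_order T lt).
Proof.
case=> irr trans total; split=> [x | x y z ltyx ltzy | x y /total[]]; rewrite /rev_order.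
- exact: irr.
- exact: trans ltzy ltyx.
- by right.
- by left.
Qed.

Lemma prime_ext_rev (X : choiceType) (lt : rel X) (F : {fset X})
    (ltB : rel (option F)) :
  prime_ext X (rev_order X lt) F ltB ->
  prime_ext X lt F (rev_order (option F) ltB).
Proof.
case=> ltB_order ltB_F; split; first exact: strict_linear_order_rev.
by move=> a b; rewrite /rev_order ltB_F.
Qed.

Lemma realizes_rev (X : choiceType) (lt : rel X) (F : {fset X})
    (ltB : rel (option F)) (x : X) :
  realizes X lt F (rev_order (option F) ltB) x ->
  realizes X (rev_order X lt) F ltB x.
Proof. by case=> xF x_cmp; split=> // a; have [] := x_cmp a. Qed.

Section RkGeInduction.

Variables (X : choiceType) (lt : rel X) (I : Type) (R : I -> I -> Prop).
Variable P : I -> {fset X} -> Prop.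
Hypothesis P_step : forall (a : I) (F : {fset X}),
  (forall b, R b a -> forall ltB : rel (option F), prime_ext X lt F ltB ->
     exists x, realizes X lt F ltB x /\ P b (x |` F)) ->
  P a F.

(* The recursive occurrence of rk_ge is nested under an existential, so the
   generated rk_ge_ind carries no induction hypothesis; this one does. *)
Fixpoint rk_ge_nested_ind a F (rkF : rk_ge X lt I R a F) {struct rkF} : P a F :=
  match rkF with
  | RkGe a F ext => P_step a F (fun b Rba ltB ltB_ext =>
      match ext b Rba ltB ltB_ext with
      | ex_intro x (conj x_real x_rk) =>
          ex_intro _ x (conj x_real (rk_ge_nested_ind b (x |` F) x_rk))
      end)
  end.

End RkGeInduction.

Lemma rk_ge_rev (X : choiceType) (lt : rel X) (I : Type) (R : I -> I -> Prop)
    (a : I) (F : {fset X}) :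
  rk_ge X lt I R a F -> rk_ge X (rev_order X lt) I R a F.
Proof.
elim/rk_ge_nested_ind=> {}a {}F IH.
constructor=> b Rba ltB /prime_ext_rev ltB_ext.
have [x [x_real x_rk]] := IH b Rba _ ltB_ext.
by exists x; split; first exact: realizes_rev.
Qed.

Theorem proposition6p8 (Y : countType) (lt : rel Y) :
  strict_linear_order Y lt ->
  forall (I : Type) (R : I -> I -> Prop), well_founded R ->
  forall a : I,
    rk_ge Y lt I R a fset0 <-> rk_ge Y (rev_order Y lt) I R a fset0.
Proof.
move=> _ I R _ a; split; first exact: rk_ge_rev.
exact: (@rk_ge_rev _ (rev_order Y lt)).
Qed.
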